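(* Let $p$ be a prime and $(K,|\cdot|)$ an ultrametric field of characteristic $p$. Let $\lambda\in K$ with $|\lambda|=1$ such that the order $q$ of $\widetilde\lambda$ in $\widetilde K^*$ is finite, and suppose $\lambda^q\ne1$. Let $S(z)\in\mathcal{O}_K[z]$ satisfy $S(0)=1$ and $\mathrm{wideg}(S(z)-1)<\infty$, and put $Q(z)=\lambda zS(z)^p$. Then the minimal period of every periodic point of $Q$ in $\mathfrak{m}_K\setminus\{0\}$ equals $q$. Furthermore, the set $F$ of all such points is non-empty and finite, and for each $a\in F$ the multiplicity $m_a$ of $a$ as a fixed point of $Q^q$ is finite and divisible by $p$, and for every integer $n\ge1$ the multiplicity of $a$ as a fixed point of $Q^{qp^n}$ equals $p^nm_a$.
   Context: $\mathcal{O}_K=\{|z|\le1\}$, $\mathfrak{m}_K=\{|z|<1\}$, $\widetilde K=\mathcal{O}_K/\mathfrak{m}_K$. For $h\in\mathcal{O}_K[[z]]$, $\mathrm{wideg}(h)$ is the order (lowest degree of a nonzero term) of its coefficientwise reduction in $\widetilde K[[\zeta]]$. Periodic points and fixed points are considered in $\mathfrak{m}_K$ (points in an algebraic closure of $K$ with norm $<1$ may be taken, extending $|\cdot|$); the multiplicity of $a$ as a fixed point of $Q^m$ is its multiplicity as a zero of $Q^m(z)-z$. *)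

From HB Require Import structures.
From mathcomp Require Import all_boot all_order all_algebra.
From mathcomp Require Import reals.
Set Implicit Arguments. Unset Strict Implicit. Unset Printing Implicit Defensive.
Import Order.TTheory GRing.Theory Num.Theory.
Local Open Scope ring_scope.

Definition ultra_abs (R : realType) (K : fieldType) (v : K -> R) : Prop :=
  [/\ (forall x, 0 <= v x),
      (forall x, (v x == 0) = (x == 0)),
      (forall x y, v (x * y) = v x * v y) &
      (forall x y, v (x + y) <= Num.max (v x) (v y))].

(* q is the (finite) order of the residue class of lam in the
   multiplicative group of the residue field O_K / m_K:
   lam^q = 1 mod m_K, and lam^k <> 1 mod m_K for 0 < k < q. *)
Definition residue_order (R : realType) (K : fieldType) (v : K -> R)
    (lam : K) (q : nat) : Prop :=
  [/\ (0 < q)%N, v (lam ^+ q - 1) < 1 &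
      forall k, (0 < k < q)%N -> ~ (v (lam ^+ k - 1) < 1)].

Definition Qpoly (K : fieldType) (lam : K) (S : {poly K}) (p : nat) : {poly K} :=
  lam%:P * 'X * S ^+ p.

Definition piter (L : fieldType) (P : {poly L}) (n : nat) : {poly L} :=
  iter n (fun r => P \Po r) 'X.

Definition periodic_pt (R : realType) (L : fieldType) (v : L -> R)
    (P : {poly L}) (a : L) : Prop :=
  [/\ v a < 1, a != 0 & exists n, (0 < n)%N /\ (piter P n).[a] = a].

Definition minimal_period (L : fieldType) (P : {poly L}) (a : L) (n : nat) : Prop :=
  [/\ (0 < n)%N, (piter P n).[a] = a &
      forall k, (0 < k < n)%N -> (piter P k).[a] != a].

Definition fix_mult (L : fieldType) (P : {poly L}) (n : nat) (a : L) : nat :=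
  mup a (piter P n - 'X).

From HB Require Import structures.
From mathcomp Require Import all_boot all_order all_algebra.
From mathcomp Require Import reals zify ring lra.
Set Implicit Arguments. Unset Strict Implicit. Unset Printing Implicit Defensive.
Import Order.TTheory GRing.Theory Num.Theory.
Local Open Scope ring_scope.

(* Write [Q^n(z) = lam^n z W_n(z)^p] with [W_n = prod_(j < n) S(Q^j(z))] and
   pick [nu] with [nu^p = lam^q]; then [Q^q(z) = z (1 + h(z))^p] with
   [h = nu W_q - 1] integral, [|h| < 1] on the open unit disk and
   [h(0) = nu - 1 <> 0]. If [Q^n(a) = a] with [0 < |a| < 1], then
   [W_n(a) = 1] modulo [m_K], so [lam^n = 1] modulo [m_K] and [q | n].
   For any map [g z = z (1 + H z)^p] of this kind, [g^p] is again of this kind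
   with [|H|] replaced by [|H|^p], while a cycle of length prime to [p] forces
   [H = 0] at its points (expand [(1 + H)^N]); by induction on the [p]-part of
   the period, the periodic points are exactly the zeros of [h] in the
   punctured disk. There are finitely many, and at least one because [h(0)]
   is small while some coefficient of [h] is a unit. Finally
   [|Q^(q p^n)(x) - x| = |x| |h(x)|^(p^(n+1))], and comparing orders of
   vanishing near [a] gives the multiplicity [p^(n+1) mult_a(h)]. *)

Lemma bernoulli_ineq (R : numDomainType) (s : R) n :
  0 <= s -> 1 + n%:R * s <= (1 + s) ^+ n.
Proof.
move=> s0; elim: n => [|n IH]; first by rewrite mul0r addr0 expr0.
apply: le_trans (_ : (1 + s) * (1 + n%:R * s) <= _); last first.
  by rewrite exprS ler_wpM2l // addr_ge0.
have -> : (1 + s) * (1 + n%:R * s) = 1 + n.+1%:R * s + n%:R * s * s.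
  by rewrite -[n.+1]addn1 natrD; ring.
by rewrite lerDl !mulr_ge0.
Qed.

Lemma exprn_lt_small (R : archiRealFieldType) (r d : R) : 0 < r -> r < 1 -> 0 < d ->
  exists n, r ^+ n < d.
Proof.
move=> r0 r1 d0; set s := r^-1 - 1.
have s0 : 0 < s by rewrite subr_gt0 invf_gt1.
exists (Num.bound (d^-1 / s)).
have hb : d^-1 / s < (Num.bound (d^-1 / s))%:R.
  by apply: archi_boundP; rewrite divr_ge0 // ltW // invr_gt0.
suff : d^-1 < r^-1 ^+ Num.bound (d^-1 / s) by rewrite exprVn ltf_pV2 ?posrE ?exprn_gt0.
have -> : r^-1 = 1 + s by rewrite /s addrC subrK.
apply: lt_le_trans (bernoulli_ineq _ (ltW s0)).
rewrite ltr_pdivrMr // in hb; lra.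
Qed.

(** * Ultrametric absolute values *)

Section Ultrametric.
Variables (R : realType) (L : fieldType) (v : L -> R).
Hypothesis hv : ultra_abs v.

Lemma v_ge0 x : 0 <= v x. Proof. by case: hv. Qed.
Lemma v_eq0 x : (v x == 0) = (x == 0). Proof. by case: hv. Qed.
Lemma vM x y : v (x * y) = v x * v y. Proof. by case: hv. Qed.
Lemma vD x y : v (x + y) <= Num.max (v x) (v y). Proof. by case: hv. Qed.

Lemma v0 : v 0 = 0. Proof. by apply/eqP; rewrite v_eq0. Qed.

Lemma v_gt0 x : x != 0 -> 0 < v x.
Proof. by move=> hx; rewrite lt_def v_eq0 hx v_ge0. Qed.

Lemma v1 : v 1 = 1.
Proof.
have h1 : v 1 != 0 by rewrite v_eq0 oner_eq0.
by apply: (mulfI h1); rewrite -vM !mulr1.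
Qed.

Lemma vN x : v (- x) = v x.
Proof.
have vN1 : v (-1) = 1.
  have := vM (-1) (-1); rewrite mulrNN mulr1 v1 -expr2 => /esym/eqP.
  by rewrite ieexprn_weq1 ?v_ge0 //= => /eqP.
by rewrite -mulN1r vM vN1 mul1r.
Qed.

Lemma vX x n : v (x ^+ n) = v x ^+ n.
Proof. by elim: n => [|n IH]; rewrite ?expr0 ?v1 // !exprS vM IH. Qed.

Lemma vD_le e x y : v x <= e -> v y <= e -> v (x + y) <= e.
Proof. by move=> hx hy; apply: le_trans (vD x y) _; rewrite ge_max hx hy. Qed.

Lemma vD_lt e x y : v x < e -> v y < e -> v (x + y) < e.
Proof. by move=> hx hy; apply: le_lt_trans (vD x y) _; rewrite gt_max hx hy. Qed.

Lemma vB_le e x y : v x <= e -> v y <= e -> v (x - y) <= e.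
Proof. by move=> hx hy; apply: vD_le; rewrite ?vN. Qed.

Lemma vB_lt e x y : v x < e -> v y < e -> v (x - y) < e.
Proof. by move=> hx hy; apply: vD_lt; rewrite ?vN. Qed.

Lemma vD_eqr x y : v x < v y -> v (x + y) = v y.
Proof.
move=> hxy; apply/eqP; rewrite eq_le vD_le ?(ltW hxy) //=.
rewrite leNgt; apply/negP => hlt.
have : v ((x + y) - x) < v y by apply: vB_lt.
by rewrite addrC addKr ltxx.
Qed.

Lemma vD_eql x y : v y < v x -> v (x + y) = v x.
Proof. by rewrite addrC; apply: vD_eqr. Qed.

Lemma v1D x : v x < 1 -> v (1 + x) = 1.
Proof. by move=> hx; rewrite vD_eql v1. Qed.

Lemma vD_eqr_small x y c : v c < 1 -> v x <= v c * v y -> v (x + y) = v y.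
Proof.
move=> hc; have [->|y0] := eqVneq y 0 => hx.
  have hx0 : v x <= 0 by rewrite v0 mulr0 in hx.
  suff -> : x = 0 by rewrite addr0.
  by apply/eqP; rewrite -v_eq0 eq_le hx0 v_ge0.
apply: vD_eqr; apply: le_lt_trans hx _.
by rewrite -[X in _ < X]mul1r ltr_pM2r ?v_gt0.
Qed.

Lemma v_mul_lt_le1 x y : v x < 1 -> v y <= 1 -> v (x * y) < 1.
Proof. by move=> hx hy; rewrite vM; apply: le_lt_trans hx; rewrite ler_piMr ?v_ge0. Qed.

Lemma v_mul_le1_lt x y : v x <= 1 -> v y < 1 -> v (x * y) < 1.
Proof. by rewrite mulrC => hx hy; apply: v_mul_lt_le1. Qed.

Lemma v_nat n : v n%:R <= 1.
Proof.
elim: n => [|n IH]; first by rewrite v0 ler01.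
by rewrite -addn1 natrD; apply: vD_le => //; rewrite v1.
Qed.

Lemma v_sum_le e n (F : 'I_n -> L) : 0 <= e -> (forall i, v (F i) <= e) ->
  v (\sum_(i < n) F i) <= e.
Proof.
move=> e0 hF; elim/big_rec: _ => [|i x _ hx]; first by rewrite v0.
exact: vD_le.
Qed.

Lemma v_sum_lt e n (F : 'I_n -> L) : 0 < e -> (forall i, v (F i) < e) ->
  v (\sum_(i < n) F i) < e.
Proof.
move=> e0 hF; elim/big_rec: _ => [|i x _ hx]; first by rewrite v0.
exact: vD_lt.
Qed.

Lemma v_prod_le1 n (F : 'I_n -> L) : (forall i, v (F i) <= 1) ->
  v (\prod_(i < n) F i) <= 1.
Proof.
move=> hF; elim/big_rec: _ => [|i x _ hx]; first by rewrite v1.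
by rewrite vM; apply: mulr_ile1 => //; apply: v_ge0.
Qed.

Lemma v_prodB_le e n (F G : 'I_n -> L) : 0 <= e ->
  (forall i, v (F i) <= 1) -> (forall i, v (G i) <= 1) ->
  (forall i, v (F i - G i) <= e) ->
  v (\prod_(i < n) F i - \prod_(i < n) G i) <= e.
Proof.
move=> e0; elim: n F G => [|n IH] F G hF hG hFG.
  by rewrite !big_ord0 subrr v0.
rewrite !big_ord_recr /=; set A := \prod_(i < n) _; set B := \prod_(i < n) _.
have -> : A * F ord_max - B * G ord_max =
    (A - B) * F ord_max + B * (F ord_max - G ord_max).
  by rewrite mulrBl mulrBr addrA subrK.
apply: vD_le; rewrite vM.
  rewrite -[e]mulr1; apply: ler_pM; rewrite ?v_ge0 //.
  exact: IH.
rewrite -[e]mul1r; apply: ler_pM; rewrite ?v_ge0 //.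
exact: v_prod_le1.
Qed.

Lemma v_expr1B_lt y m : v y <= 1 -> v (y - 1) < 1 -> v (y ^+ m - 1) < 1.
Proof.
move=> hy hy1; elim: m => [|m IH]; first by rewrite expr0 subrr v0 ltr01.
have -> : y ^+ m.+1 - 1 = y * (y ^+ m - 1) + (y - 1).
  by rewrite exprS mulrBr mulr1 addrA subrK.
apply: vD_lt => //; rewrite vM; apply: le_lt_trans IH.
by rewrite -[X in _ <= X]mul1r ler_wpM2r ?v_ge0.
Qed.

Lemma residue_order_dvd lam q n : v lam = 1 -> residue_order v lam q ->
  v (lam ^+ n - 1) < 1 -> (q %| n)%N.
Proof.
move=> hlam [q0 hq hqmin] hn.
have hr : v (lam ^+ (n %% q) - 1) < 1.
  have -> : lam ^+ (n %% q) - 1 =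
      (lam ^+ n - 1) - lam ^+ (n %% q) * ((lam ^+ q) ^+ (n %/ q) - 1).
    by rewrite {2}(divn_eq n q) exprD mulnC exprM; ring.
  apply: vB_lt => //; rewrite vM vX hlam expr1n mul1r.
  by apply: v_expr1B_lt; rewrite // vX hlam expr1n.
have [r0|r0] := posnP (n %% q); first exact/eqP.
by exfalso; apply: (hqmin (n %% q)%N) => //; rewrite r0 ltn_mod q0.
Qed.

(** * Polynomials with coefficients in the valuation ring *)

Definition gauss_le1 (g : {poly L}) := forall i, v g`_i <= 1.
Definition gauss_lt1 (g : {poly L}) := forall i, v g`_i < 1.

Lemma gauss_le1C c : v c <= 1 -> gauss_le1 c%:P.
Proof. by move=> hc i; rewrite coefC; case: ifP; rewrite ?v0 ?ler01. Qed.

Lemma gauss_le1_1 : gauss_le1 1.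
Proof. by apply: gauss_le1C; rewrite v1. Qed.

Lemma gauss_le1X : gauss_le1 'X.
Proof. by move=> i; rewrite coefX; case: (_ == _); rewrite ?v1 ?v0 ?ler01. Qed.

Lemma gauss_le1B f g : gauss_le1 f -> gauss_le1 g -> gauss_le1 (f - g).
Proof. by move=> hf hg i; rewrite coefB; apply: vB_le. Qed.

Lemma gauss_le1M f g : gauss_le1 f -> gauss_le1 g -> gauss_le1 (f * g).
Proof.
move=> hf hg i; rewrite coefM; apply: v_sum_le => // j; rewrite vM.
by apply: mulr_ile1; rewrite ?v_ge0.
Qed.

Lemma gauss_le1Z c f : v c <= 1 -> gauss_le1 f -> gauss_le1 (c *: f).
Proof. by move=> hc hf i; rewrite coefZ vM mulr_ile1 ?v_ge0. Qed.

Lemma gauss_le1Xn f n : gauss_le1 f -> gauss_le1 (f ^+ n).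
Proof.
move=> hf; elim: n => [|n IH]; first by rewrite expr0; apply: gauss_le1_1.
by rewrite exprS; apply: gauss_le1M.
Qed.

Lemma gauss_le1_prod n (F : 'I_n -> {poly L}) : (forall i, gauss_le1 (F i)) ->
  gauss_le1 (\prod_(i < n) F i).
Proof.
move=> hF; elim/big_rec: _ => [|i x _ hx]; [exact: gauss_le1_1 | exact: gauss_le1M].
Qed.

Lemma gauss_le1_comp f g : gauss_le1 f -> gauss_le1 g -> gauss_le1 (f \Po g).
Proof.
move=> hf hg i; rewrite comp_polyE coef_sum; apply: v_sum_le => // j.
by apply: gauss_le1Z => //; apply: gauss_le1Xn.
Qed.

Lemma gauss_lt1M f g : gauss_lt1 f -> gauss_le1 g -> gauss_lt1 (f * g).
Proof.
by move=> hf hg i; rewrite coefM; apply: v_sum_lt => // j; apply: v_mul_lt_le1.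
Qed.

Lemma gauss_le1_MXaddC g c : gauss_le1 (g * 'X + c%:P) -> gauss_le1 g /\ v c <= 1.
Proof.
move=> h; split; last by have := h 0%N; rewrite coefD coefMX coefC /= add0r.
by move=> i; have := h i.+1; rewrite coefD coefMX coefC /= addr0.
Qed.

Lemma gauss_le1_horner g x : gauss_le1 g -> v x <= 1 -> v g.[x] <= 1.
Proof.
elim/poly_ind: g => [|g c IH] hg hx; first by rewrite horner0 v0 ler01.
have [hg' hc] := gauss_le1_MXaddC hg.
rewrite hornerMXaddC; apply: vD_le => //; rewrite vM.
by apply: mulr_ile1; rewrite ?v_ge0 ?IH.
Qed.

Lemma hornerMXaddCB (g : {poly L}) c x y : (g * 'X + c%:P).[x] - (g * 'X + c%:P).[y] =
  (g.[x] - g.[y]) * x + g.[y] * (x - y).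
Proof. by rewrite !hornerMXaddC; ring. Qed.

Lemma gauss_le1_lip g x y : gauss_le1 g -> v x <= 1 -> v y <= 1 ->
  v (g.[x] - g.[y]) <= v (x - y).
Proof.
elim/poly_ind: g => [|g c IH] hg hx hy; first by rewrite !horner0 subrr v0 v_ge0.
have [hg' _] := gauss_le1_MXaddC hg.
rewrite hornerMXaddCB; apply: vD_le; rewrite vM.
  by rewrite -[X in _ <= X]mulr1; apply: ler_pM; rewrite ?v_ge0 ?IH.
by rewrite -[X in _ <= X]mul1r; apply: ler_pM; rewrite ?v_ge0 ?gauss_le1_horner.
Qed.

Lemma poly_lip g : exists2 C, 0 <= C &
  forall x y, v x <= 1 -> v y <= 1 -> v (g.[x] - g.[y]) <= C * v (x - y).
Proof.
have bounded (f : {poly L}) : exists2 B, 0 <= B & forall x, v x <= 1 -> v f.[x] <= B.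
  elim/poly_ind: f => [|f c [B B0 hB]]; first by exists 0 => // x _; rewrite horner0 v0.
  exists (Num.max B (v c)) => [|x hx]; first by rewrite le_max B0.
  rewrite hornerMXaddC; apply: vD_le; last by rewrite le_max lexx orbT.
  rewrite vM -[X in _ <= X]mulr1; apply: ler_pM; rewrite ?v_ge0 //.
  by rewrite le_max hB.
elim/poly_ind: g => [|g c [C C0 hC]].
  by exists 0 => // *; rewrite !horner0 subrr v0 mul0r.
have [B B0 hB] := bounded g.
exists (Num.max C B) => [|x y hx hy]; first by rewrite le_max C0.
rewrite hornerMXaddCB; apply: vD_le; rewrite vM.
  apply: le_trans (_ : C * v (x - y) * 1 <= _).
    by apply: ler_pM; rewrite ?v_ge0 ?hC.
  by rewrite mulr1 ler_wpM2r ?v_ge0 // le_max lexx.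
by rewrite ler_wpM2r ?v_ge0 // le_max hB ?orbT.
Qed.

(* [redeg d g]: [g] is integral and its reduction modulo [m_K] has degree
   exactly [d]. *)
Definition redeg (d : nat) (g : {poly L}) :=
  [/\ gauss_le1 g, v g`_d = 1 & forall i, (d < i)%N -> v g`_i < 1].

Lemma redegC c : v c = 1 -> redeg 0 c%:P.
Proof.
move=> hc; split; first by apply: gauss_le1C; rewrite hc.
  by rewrite coefC.
by move=> [|i] // _; rewrite coefC v0 ltr01.
Qed.

Lemma redegX : redeg 1 'X.
Proof.
split; first exact: gauss_le1X.
  by rewrite coefX v1.
by move=> [|[|i]] // _; rewrite coefX v0 ltr01.
Qed.

Lemma redegM d e f g : redeg d f -> redeg e g -> redeg (d + e) (f * g).
Proof.
move=> [hf1 hf2 hf3] [hg1 hg2 hg3]; split; first exact: gauss_le1M.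
  have hd : (d < (d + e).+1)%N by rewrite ltnS leq_addr.
  rewrite coefM (bigD1 (Ordinal hd)) //= addrC vD_eqr vM hf2 addKn hg2 mulr1 //.
  rewrite big_mkcond /=; apply: v_sum_lt => // j; case: ifP => hj; last by rewrite v0.
  case: (ltngtP j d) => hjd.
  - by apply: v_mul_le1_lt => //; apply: hg3; lia.
  - exact: v_mul_lt_le1 (hf3 _ hjd) (hg1 _).
  - by move: hj; rewrite -(inj_eq val_inj) /= hjd eqxx.
move=> i hi; rewrite coefM; apply: v_sum_lt => // j.
case: (leqP j d) => hjd; last exact: v_mul_lt_le1 (hf3 _ hjd) (hg1 _).
by apply: v_mul_le1_lt => //; apply: hg3; lia.
Qed.

Lemma redegXn d f n : redeg d f -> redeg (n * d) (f ^+ n).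
Proof.
move=> hf; elim: n => [|n IH].
  by rewrite expr0 -polyC1; apply: redegC; rewrite v1.
by rewrite exprS mulSn; apply: redegM.
Qed.

Lemma redeg_comp d e f g : (0 < e)%N -> redeg d f -> redeg e g ->
  redeg (d * e) (f \Po g).
Proof.
move=> e0 [hf1 hf2 hf3] hg; have [hg1 _ _] := hg.
have hd : (d < size f)%N.
  rewrite ltnNge; apply/negP => hs; move: hf2.
  by rewrite nth_default // v0 => /eqP; rewrite eq_sym oner_eq0.
have hgi i : redeg (i * e) (g ^+ i) by apply: redegXn.
split; first exact: gauss_le1_comp.
  rewrite comp_polyE coef_sum (bigD1 (Ordinal hd)) //= coefZ.
  have [_ hgd _] := hgi d; rewrite addrC vD_eqr vM hf2 hgd mulr1 //.
  rewrite big_mkcond /=; apply: v_sum_lt => // j; case: ifP => hj; last by rewrite v0.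
  rewrite coefZ; have [hi1 _ hi3] := hgi j; case: (ltngtP j d) => hjd.
  - by apply: v_mul_le1_lt => //; apply: hi3; rewrite ltn_pmul2r.
  - exact: v_mul_lt_le1 (hf3 _ hjd) (hi1 _).
  - by move: hj; rewrite -(inj_eq val_inj) /= hjd eqxx.
move=> i hi; rewrite comp_polyE coef_sum; apply: v_sum_lt => // j.
rewrite coefZ; have [hi1 _ hi3] := hgi j.
case: (leqP j d) => hjd; last exact: v_mul_lt_le1 (hf3 _ hjd) (hi1 _).
by apply: v_mul_le1_lt => //; apply: hi3; apply: leq_ltn_trans hi; rewrite leq_pmul2r.
Qed.

(** * Maps of the form [x (1 + H x)^p] *)

Section PthPowerForm.
Variable p : nat.
Hypotheses (hp : prime p) (hch : p \in [pchar L]).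

Let p_gt0 : (0 < p)%N := prime_gt0 hp.

Lemma frobD (x y : L) : (x + y) ^+ p = x ^+ p + y ^+ p.
Proof. by rewrite -!(pFrobenius_autE hch) rmorphD. Qed.

Lemma frobB (x y : L) : (x - y) ^+ p = x ^+ p - y ^+ p.
Proof. by rewrite -!(pFrobenius_autE hch) rmorphB. Qed.

Lemma frob_inj (x y : L) : x ^+ p = y ^+ p -> x = y.
Proof. by rewrite -!(pFrobenius_autE hch) => /fmorph_inj. Qed.

Lemma v_nat_coprime n : ~~ (p %| n)%N -> v n%:R = 1.
Proof.
rewrite (dvdn_pcharf hch) => hn.
have /(congr1 v) : (n%:R : L) ^+ p = n%:R.
  by rewrite -(pFrobenius_autE hch) pFrobenius_aut_nat.
rewrite vX => htp; have hn0 : v n%:R != 0 by rewrite v_eq0.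
have e : v n%:R * v n%:R ^+ p.-1 = v n%:R * 1 by rewrite mulr1 -exprS prednK.
move/(mulfI hn0)/eqP: e.
by rewrite ieexprn_weq1 ?v_ge0 // -subn1 subn_eq0 leqNgt prime_gt1 //= => /eqP.
Qed.

(* The normal form of [Q^q] on the open unit disk; [p]-th iteration preserves
   it and raises [|H|] to the [p]-th power ([ppow_form_iterp], [v_iterp_H]). *)
Definition ppow_form (g H : L -> L) :=
  (forall x, v x < 1 -> g x = x * (1 + H x) ^+ p /\ v (H x) < 1) /\
  (forall x y, v x < 1 -> v y < 1 -> v (H x - H y) <= v (x - y)).

Lemma ppow_form_ext g g' H : g =1 g' -> ppow_form g H -> ppow_form g' H.
Proof. by move=> e [h1 h2]; split=> // x hx; rewrite -e; apply: h1. Qed.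

Section Form.
Variables (g H : L -> L).
Hypothesis hg : ppow_form g H.

Lemma ppow_form_small x : v x < 1 -> v (H x) < 1.
Proof. by move=> /hg.1 []. Qed.

Lemma ppow_form_abs x : v x < 1 -> v (g x) = v x.
Proof.
by move=> hx; have [-> /v1D hH] := hg.1 x hx; rewrite vM vX hH expr1n mulr1.
Qed.

Lemma ppow_form_iter_abs j x : v x < 1 -> v (iter j g x) = v x.
Proof. by move=> hx; elim: j => //= j IH; rewrite ppow_form_abs // IH. Qed.

Lemma ppow_form_iter_lt1 j x : v x < 1 -> v (iter j g x) < 1.
Proof. by move=> hx; rewrite ppow_form_iter_abs. Qed.

Lemma ppow_form_subX x : v x < 1 -> v (g x - x) = v x * v (H x) ^+ p.
Proof.
move=> hx; have [-> _] := hg.1 x hx.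
have -> : x * (1 + H x) ^+ p - x = x * ((1 + H x) ^+ p - 1) by rewrite mulrBr mulr1.
by rewrite vM frobD expr1n addrC addKr vX.
Qed.

Lemma ppow_form_lip x y : v x < 1 -> v y < 1 -> v (g x - g y) <= v (x - y).
Proof.
move=> hx hy; have [-> hHx] := hg.1 x hx; have [-> hHy] := hg.1 y hy.
have -> : x * (1 + H x) ^+ p - y * (1 + H y) ^+ p =
    (x - y) * (1 + H x) ^+ p + y * ((1 + H x) - (1 + H y)) ^+ p.
  by rewrite frobB; ring.
rewrite opprD addrACA subrr add0r.
have hl := hg.2 x y hx hy.
apply: vD_le; first by rewrite vM vX v1D // expr1n mulr1.
rewrite vM vX -[X in _ <= X]mul1r; apply: ler_pM; rewrite ?exprn_ge0 ?v_ge0 ?(ltW hy) //.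
apply: le_trans hl; apply: ler_iXnr; rewrite ?v_ge0 //.
by apply: ltW; apply: vB_lt.
Qed.

Lemma ppow_form_iter_lip j x y : v x < 1 -> v y < 1 ->
  v (iter j g x - iter j g y) <= v (x - y).
Proof.
move=> hx hy; elim: j => //= j IH; apply: le_trans IH.
by apply: ppow_form_lip; rewrite ppow_form_iter_abs.
Qed.

Lemma ppow_form_iter n x : v x < 1 ->
  iter n g x = x * (\prod_(j < n) (1 + H (iter j g x))) ^+ p.
Proof.
move=> hx; elim: n => [|n IH]; first by rewrite big_ord0 expr1n mulr1.
rewrite big_ord_recr /= exprMn mulrA -IH.
by have [-> _] := hg.1 (iter n g x) (ppow_form_iter_lt1 n hx).
Qed.

Lemma ppow_form_iterB_le j x : v x < 1 ->
  v (iter j g x - x) <= v x * v (H x) ^+ p.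
Proof.
move=> hx; have hH := ppow_form_small hx.
have hb : v x * v (H x) ^+ p <= v (H x).
  rewrite -[X in _ <= X]mul1r; apply: ler_pM; rewrite ?exprn_ge0 ?v_ge0 ?(ltW hx) //.
  by apply: ler_iXnr; rewrite ?v_ge0 ?(ltW hH).
elim: j => [|j IH]; first by rewrite /= subrr v0 mulr_ge0 ?exprn_ge0 ?v_ge0.
have hxj : v (iter j g x) < 1 by rewrite ppow_form_iter_abs.
have -> : iter j.+1 g x - x = (g (iter j g x) - iter j g x) + (iter j g x - x).
  by rewrite /= addrA subrK.
apply: vD_le => //; rewrite ppow_form_subX // ppow_form_iter_abs //.
rewrite ler_wpM2l ?v_ge0 // lerXn2r ?nnegrE ?v_ge0 //.
rewrite -(subrK (H x) (H _)); apply: vD_le => //.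
by apply: le_trans (hg.2 _ _ hxj hx) _; apply: le_trans IH hb.
Qed.

Lemma ppow_form_prodB_le n x : v x < 1 ->
  v (\prod_(j < n) (1 + H (iter j g x)) - (1 + H x) ^+ n) <= v x * v (H x) ^+ p.
Proof.
move=> hx; have hH1 y : v y < 1 -> v (1 + H y) <= 1.
  by move=> hy; rewrite v1D ?ppow_form_small.
have -> : (1 + H x) ^+ n = \prod_(j < n) (1 + H x) by rewrite prodr_const card_ord.
apply: v_prodB_le.
- by rewrite mulr_ge0 ?v_ge0 ?exprn_ge0 ?v_ge0.
- by move=> j; rewrite hH1 ?ppow_form_iter_abs.
- by move=> j; rewrite hH1.
move=> j; rewrite opprD addrACA subrr add0r.
apply: le_trans (ppow_form_iterB_le j hx).
by apply: hg.2; rewrite ?ppow_form_iter_abs.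
Qed.

Definition iterp_H x := \prod_(j < p) (1 + H (iter j g x)) - 1.

Lemma v_iterp_H x : v x < 1 -> v (iterp_H x) = v (H x) ^+ p.
Proof.
move=> hx; have he := ppow_form_prodB_le p hx.
rewrite frobD expr1n -vX in he.
have -> : iterp_H x = (\prod_(j < p) (1 + H (iter j g x)) - (1 + H x ^+ p)) + H x ^+ p.
  by rewrite /iterp_H opprD addrA subrK.
by rewrite (vD_eqr_small hx he) vX.
Qed.

Lemma ppow_form_iterp : ppow_form (iter p g) iterp_H.
Proof.
split=> [x hx|x y hx hy].
  split; last by rewrite v_iterp_H // exprn_ilt1 ?v_ge0 ?ppow_form_small // -lt0n.
  by rewrite ppow_form_iter // /iterp_H addrC subrK.
rewrite /iterp_H opprD addrACA subrr addr0; apply: v_prodB_le; rewrite ?v_ge0 //.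
- by move=> i; rewrite v1D ?ppow_form_small ?ppow_form_iter_lt1.
- by move=> i; rewrite v1D ?ppow_form_small ?ppow_form_iter_lt1.
move=> i; rewrite opprD addrACA subrr add0r.
apply: le_trans (ppow_form_iter_lip i hx hy).
by apply: hg.2; rewrite ppow_form_iter_lt1.
Qed.

End Form.

Lemma v_exprD1B_coprime y n : v y < 1 -> ~~ (p %| n)%N -> v ((1 + y) ^+ n - 1) = v y.
Proof.
move=> hy hn; have hy1 := ltW hy.
have binom : v ((1 + y) ^+ n - 1 - n%:R * y) <= v y * v (n%:R * y).
  rewrite vM v_nat_coprime // mul1r -expr2.
  elim: n {hn} => [|n IH]; first by rewrite expr0 subrr mul0r subr0 v0 exprn_ge0 ?v_ge0.
  have -> : (1 + y) ^+ n.+1 - 1 - n.+1%:R * y =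
      (1 + y) * ((1 + y) ^+ n - 1 - n%:R * y) + n%:R * y ^+ 2.
    by rewrite exprS -[n.+1]addn1 natrD; ring.
  apply: vD_le; rewrite vM -[X in _ <= X]mul1r; apply: ler_pM; rewrite ?v_ge0 //.
    by rewrite v1D.
  exact: v_nat.
  by rewrite vX.
by rewrite -(subrK (n%:R * y) (_ - 1)) (vD_eqr_small hy binom) vM v_nat_coprime // mul1r.
Qed.

Lemma ppow_form_coprime_periodic g H N x : ppow_form g H ->
  v x < 1 -> x != 0 -> ~~ (p %| N)%N -> iter N g x = x -> H x = 0.
Proof.
move=> hg hx x0 hN; rewrite (ppow_form_iter hg) // => e.
set P := \prod_(j < N) _ in e.
have P1 : P = 1.
  by apply: frob_inj; apply: (mulfI x0); rewrite expr1n mulr1.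
have hH := ppow_form_small hg hx.
have he : v (P - (1 + H x) ^+ N) <= v x * v ((1 + H x) ^+ N - 1).
  apply: le_trans (ppow_form_prodB_le hg N hx) _.
  rewrite v_exprD1B_coprime // ler_wpM2l ?v_ge0 //.
  by apply: ler_iXnr; rewrite ?v_ge0 ?(ltW hH).
apply/eqP; rewrite -v_eq0 -(v_exprD1B_coprime hH hN).
by rewrite -(vD_eqr_small hx he) addrA subrK P1 subrr v0.
Qed.

Lemma ppow_form_periodic g H N x : ppow_form g H -> (0 < N)%N ->
  v x < 1 -> x != 0 -> iter N g x = x -> H x = 0.
Proof.
elim/ltn_ind: N g H => N IH g H hg N0 hx x0 hit.
have [/dvdnP [K eK]|hpN] := boolP (p %| N)%N; last first.
  exact: ppow_form_coprime_periodic hg hx x0 hpN hit.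
have K0 : (0 < K)%N by move: N0; rewrite eK muln_gt0 => /andP[].
have KN : (K < N)%N by rewrite eK -[X in (X < _)%N]muln1 ltn_pmul2l ?prime_gt1.
have /eqP : iterp_H g H x = 0.
  by apply: (IH K KN _ _ (ppow_form_iterp hg)); rewrite // -iterM -eK.
by rewrite -v_eq0 v_iterp_H // expf_eq0 p_gt0 v_eq0 => /eqP.
Qed.

Lemma ppow_form_iter_pexpn g H n : ppow_form g H -> exists2 Hn,
  ppow_form (iter (p ^ n) g) Hn & forall x, v x < 1 -> v (Hn x) = v (H x) ^+ (p ^ n).
Proof.
move=> hg; elim: n => [|n [Hn hn vHn]].
  by exists H => [|x _]; rewrite ?expn0 ?expr1 //; apply: (ppow_form_ext _ hg).
exists (iterp_H (iter (p ^ n) g) Hn) => [|x hx].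
  by apply: (ppow_form_ext _ (ppow_form_iterp hn)) => y; rewrite expnS iterM.
by rewrite v_iterp_H // vHn // -exprM expnSr.
Qed.

Lemma v_iter_pexpn_subX g H n x : ppow_form g H -> v x < 1 ->
  v (iter (p ^ n) g x - x) = v x * v (H x) ^+ (p ^ n.+1).
Proof.
move=> hg hx; have [Hn hn vHn] := ppow_form_iter_pexpn n hg.
by rewrite (ppow_form_subX hn) // vHn // -exprM expnSr.
Qed.

End PthPowerForm.

(** * Multiplicities from absolute values *)

Lemma mup_factor (f : {poly L}) a : f != 0 ->
  exists2 F : {poly L}, f = F * ('X - a%:P) ^+ mup a f & ~~ root F a.
Proof.
move=> f0; have [m [F]] := multiplicity_XsubC f a; rewrite f0 /= => hF ef.
by exists F; rewrite // {2}ef mupMr // mup_XsubCX eqxx.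
Qed.

Lemma v_horner_mup (f : {poly L}) a : f != 0 -> v a <= 1 ->
  exists A d, [/\ 0 < A, 0 < d &
    forall e, v e < d -> v f.[a + e] = v e ^+ mup a f * A].
Proof.
move=> f0 ha; have [F eF Fa] := mup_factor a f0.
have [C C0 hC] := poly_lip F.
have A0 : 0 < v F.[a] by rewrite v_gt0.
exists (v F.[a]), (Num.min 1 (v F.[a] / (C + 1))); split => //.
  by rewrite lt_min ltr01 divr_gt0 // ltr_wpDl.
move=> e; rewrite lt_min => /andP[e1 eA].
rewrite {1}eF hornerM horner_exp hornerXsubC addrAC subrr add0r vM vX mulrC.
congr (_ * _); rewrite -(subrK F.[a] F.[a + e]) vD_eqr //.
have hae : v (a + e) <= 1 by apply: vD_le => //; apply: ltW.
apply: le_lt_trans (hC _ _ hae ha) _; rewrite addrAC subrr add0r.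
rewrite ltr_pdivlMr ?ltr_wpDl // in eA; apply: le_lt_trans eA.
by rewrite mulrDr mulr1 mulrC lerDl v_ge0.
Qed.

(* Multiplicities are read off from the absolute values at the points
   [a + pi^n], which tend to [a]. *)
Lemma mup_eq_of_v (f g : {poly L}) a pi c k d :
  f != 0 -> g != 0 -> v a <= 1 -> 0 < v pi < 1 -> 0 < c -> 0 < d ->
  (forall e, v e < d -> v f.[a + e] = c * v g.[a + e] ^+ k) ->
  mup a f = (k * mup a g)%N.
Proof.
move=> f0 g0 ha /andP[pi0 pi1] c0 d0 hfg.
have [Af [df [Af0 df0 hf]]] := v_horner_mup f0 ha.
have [Ag [dg [Ag0 dg0 hg]]] := v_horner_mup g0 ha.
set dd := Num.min d (Num.min df dg).
have [n hn] : exists n, v pi ^+ n < dd by apply: exprn_lt_small; rewrite // !lt_min d0 df0.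
set mf := mup a f; set mg := mup a g.
have E e : v e < dd -> v e ^+ mf * Af = c * (v e ^+ mg * Ag) ^+ k.
  by rewrite !lt_min => /and3P[hd hdf hdg]; rewrite -hf // -hg // hfg.
have E1 := E (pi ^+ n); rewrite vX in E1; have {}E1 := E1 hn.
have E2 := E (pi ^+ n.+1); rewrite vX exprS in E2.
have {}E2 : (v pi * v pi ^+ n) ^+ mf * Af = c * ((v pi * v pi ^+ n) ^+ mg * Ag) ^+ k.
  apply: E2; apply: le_lt_trans hn; rewrite ler_piMl ?exprn_ge0 ?ltW //.
set X := v pi ^+ n in E1 E2.
have X0 : 0 < X by rewrite exprn_gt0.
have : (X ^+ mf * Af) * v pi ^+ mf = (X ^+ mf * Af) * v pi ^+ (mg * k).
  transitivity ((v pi * X) ^+ mf * Af); first by rewrite exprMn; ring.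
  by rewrite E2 E1 !exprMn -!exprM; ring.
have XA0 : X ^+ mf * Af != 0 by rewrite mulf_neq0 ?expf_neq0 // gt_eqF.
have pi_neq1 : v pi != 1 by rewrite lt_eqF.
by move/(mulfI XA0)/(ieexprIn pi0 pi_neq1) => ->; rewrite mulnC.
Qed.

End Ultrametric.

Section ClosedUltrametric.
Variables (R : realType) (L : closedFieldType) (v : L -> R).
Hypothesis hv : ultra_abs v.

Lemma closed_root_seq (P : {poly L}) : P != 0 ->
  exists s : seq L, forall a, root P a = (a \in s).
Proof.
move=> P0; have [rs ers] := closed_field_poly_normal P.
by exists rs => a; rewrite ers rootZ ?lead_coef_eq0 // root_prod_XsubC.
Qed.

Lemma coef_le_coef0_XsubCM (g : {poly L}) r :
  (forall i, v g`_i <= v g`_0) -> 1 <= v r ->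
  forall i, v (('X - r%:P) * g)`_i <= v (('X - r%:P) * g)`_0.
Proof.
move=> hg hr i; rewrite !(mulrBl, coefB, coefXM, coefCM) /= sub0r (vN hv) (vM hv).
case: i => [|i] /=; first by rewrite sub0r (vN hv) (vM hv).
apply: (vB_le hv); last by rewrite (vM hv) ler_wpM2l ?(v_ge0 hv).
by apply: le_trans (hg i) _; rewrite ler_peMl ?(v_ge0 hv).
Qed.

(* If all roots had absolute value [>= 1], the constant coefficient would
   dominate all the others. *)
Lemma exists_small_root (f : {poly L}) : v f`_0 < 1 -> (exists i, v f`_i = 1) ->
  exists2 a, v a < 1 & root f a.
Proof.
move=> hf0 [i hi]; have [rs ers] := closed_field_poly_normal f.
have [/hasP [a ars ha]|hn] := boolP (has (fun z => v z < 1) rs).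
  exists a; rewrite // ers rootE hornerZ.
  have /rootP -> : root (\prod_(z <- rs) ('X - z%:P)) a by rewrite root_prod_XsubC.
  by rewrite mulr0.
suff dom : forall j, v f`_j <= v f`_0 by have := le_lt_trans (dom i) hf0; rewrite hi ltxx.
rewrite ers; elim: rs hn {ers} => [_ [|j]|z rs IH].
- by [].
- by rewrite big_nil alg_polyC !coefC /= (v0 hv) (v_ge0 hv).
rewrite /= negb_or -leNgt => /andP[hz /IH {}IH].
by rewrite big_cons scalerAr; apply: coef_le_coef0_XsubCM.
Qed.

End ClosedUltrametric.

(** * The dynamics of [Q] *)

Lemma closed_field_exists_root (L : closedFieldType) (c : L) n :
  (0 < n)%N -> exists x, x ^+ n = c.
Proof.
move=> n0; have : size ('X^n - c%:P) != 1 by rewrite size_XnsubC // eqSS -lt0n.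
by move/closed_rootP => [x]; rewrite rootE !hornerE subr_eq0 => /eqP; exists x.
Qed.

Lemma residue_order_rmorph (R : realType) (K L : fieldType) (absK : K -> R)
    (absL : L -> R) (f : {rmorphism K -> L}) lam q :
  (forall x, absL (f x) = absK x) ->
  residue_order absK lam q -> residue_order absL (f lam) q.
Proof.
move=> hf [q0 hq1 hqmin].
by split=> // [|k /hqmin]; rewrite -rmorphXn -(rmorph1 f) -rmorphB hf.
Qed.

Lemma piter_horner (L : fieldType) (P : {poly L}) n x :
  (piter P n).[x] = iter n (horner P) x.
Proof. by elim: n => [|n IH]; rewrite /= ?hornerX // horner_comp -IH. Qed.

Lemma piter_Qpoly (L : fieldType) (lam : L) (S : {poly L}) p n :
  piter (Qpoly lam S p) n =
  (lam ^+ n)%:P * 'X * (\prod_(j < n) (S \Po piter (Qpoly lam S p) j)) ^+ p.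
Proof.
elim: n => [|n IH]; first by rewrite big_ord0 expr1n mulr1 expr0 polyC1 mul1r.
rewrite [piter _ n.+1]/= big_ord_recr /= -/(piter _ n).
rewrite /Qpoly !comp_polyM comp_polyC comp_polyX rmorphXn /= -/(Qpoly lam S p) IH.
by rewrite exprSr polyCM !exprMn; ring.
Qed.

Lemma map_Qpoly (K L : fieldType) (f : {rmorphism K -> L}) lam (S : {poly K}) p :
  map_poly f (Qpoly lam S p) = Qpoly (f lam) (map_poly f S) p.
Proof. by rewrite /Qpoly !rmorphM /= map_polyC map_polyX rmorphXn. Qed.

Lemma piterM_horner (L : fieldType) (P : {poly L}) m n x :
  (piter P (m * n)).[x] = iter m (horner (piter P n)) x.
Proof.
rewrite piter_horner iterM; apply: eq_iter => y.
by rewrite piter_horner.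
Qed.

Section QDynamics.
Variables (R : realType) (L : closedFieldType) (v : L -> R).
Variables (p : nat) (lam nu : L) (q : nat) (S : {poly L}).
Hypotheses (hv : ultra_abs v) (hp : prime p) (hch : p \in [pchar L]).
Hypotheses (hlam : v lam = 1) (hq : residue_order v lam q) (hlamq : lam ^+ q != 1).
Hypotheses (hS : gauss_le1 v S) (hS0 : S`_0 = 1) (hSdeg : exists i, v (S - 1)`_i = 1).
Hypothesis hnu : nu ^+ p = lam ^+ q.

Local Notation Q := (Qpoly lam S p).

Definition Qprod n := \prod_(j < n) (S \Po piter Q j).

(* [nu] is a [p]-th root of [lam^q], so that [Q^q = X (1 + Hq)^p] ([piter_Qq]). *)
Definition Hq := nu%:P * Qprod q - 1.

Let p_gt0 : (0 < p)%N := prime_gt0 hp.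

Lemma piter_gauss_le1 n : gauss_le1 v (piter Q n).
Proof.
have hQ : gauss_le1 v Q.
  have hlamC : gauss_le1 v lam%:P by apply: (gauss_le1C hv); rewrite hlam.
  apply: (gauss_le1M hv); last exact: gauss_le1Xn.
  by apply: (gauss_le1M hv) => //; apply: gauss_le1X.
by elim: n => [|n IH]; [exact: gauss_le1X | exact: gauss_le1_comp].
Qed.

Lemma Qprod_gauss_le1 n : gauss_le1 v (Qprod n).
Proof. by apply: (gauss_le1_prod hv) => j; apply: gauss_le1_comp (piter_gauss_le1 j). Qed.

Lemma piter_horner0 n : (piter Q n).[0] = 0.
Proof. by rewrite piter_Qpoly !hornerM hornerX mulr0 mul0r. Qed.

Lemma v_piter_le n x : v x <= 1 -> v (piter Q n).[x] <= v x.
Proof.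
move=> hx; have := gauss_le1_lip hv (piter_gauss_le1 n) hx (_ : v 0 <= 1).
by rewrite piter_horner0 !subr0 (v0 hv) ler01; apply.
Qed.

Lemma v_Qprod_sub1 n x : v x <= 1 -> v ((Qprod n).[x] - 1) <= v x.
Proof.
move=> hx; have -> : (1 : L) = \prod_(j < n) 1 by rewrite big1.
rewrite /Qprod horner_prod; apply: v_prodB_le; rewrite ?(v_ge0 hv) // => j.
- rewrite horner_comp; exact: (gauss_le1_horner hv hS (le_trans (v_piter_le _ hx) hx)).
- by rewrite (v1 hv).
rewrite horner_comp -hS0 -horner_coef0.
apply: le_trans (gauss_le1_lip hv hS _ _) _; rewrite ?(v0 hv) ?ler01 ?subr0 //.
  exact: le_trans (v_piter_le _ hx) hx.
exact: v_piter_le.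
Qed.

Lemma period_dvd n a : v a < 1 -> a != 0 -> (piter Q n).[a] = a -> (q %| n)%N.
Proof.
move=> ha a0; rewrite piter_Qpoly !hornerE -/(Qprod n); set w := (Qprod n).[a] => e.
have e1 : lam ^+ n * w ^+ p = 1 by apply: (mulfI a0); rewrite mulr1 -{2}e; ring.
apply: (residue_order_dvd hv hlam hq).
have -> : lam ^+ n - 1 = - (lam ^+ n * (w ^+ p - 1)) by rewrite mulrBr mulr1 e1 opprB.
rewrite (vN hv) (vM hv) (vX hv) hlam expr1n mul1r -(expr1n _ p) -(frobB hch) (vX hv).
rewrite expr_lt1 ?(v_ge0 hv) ?p_gt0 //.
by apply: le_lt_trans (v_Qprod_sub1 n (ltW ha)) ha.
Qed.

Lemma v_nu : v nu = 1.
Proof.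
have : v nu ^+ p == 1 by rewrite -(vX hv) hnu (vX hv) hlam expr1n.
by rewrite ieexprn_weq1 ?(v_ge0 hv) // (negbTE (lt0n_neq0 p_gt0)) => /eqP.
Qed.

Lemma v_nu_sub1 : v (nu - 1) < 1.
Proof.
have [q0 hlamq1 _] := hq.
by rewrite -(expr_lt1 p_gt0) ?(v_ge0 hv) // -(vX hv) (frobB hch) hnu expr1n.
Qed.

Lemma nu_neq1 : nu != 1.
Proof. by apply: contraNneq hlamq => nu1; rewrite -hnu nu1 expr1n. Qed.

Lemma piter_Qq : piter Q q = 'X * (1 + Hq) ^+ p.
Proof. by rewrite piter_Qpoly /Hq addrC subrK exprMn -polyC_exp hnu; ring. Qed.

Lemma Hq_gauss_le1 : gauss_le1 v Hq.
Proof.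
have hnuC : gauss_le1 v nu%:P by apply: (gauss_le1C hv); rewrite v_nu.
apply: (gauss_le1B hv); last exact: gauss_le1_1.
by apply: (gauss_le1M hv) => //; apply: Qprod_gauss_le1.
Qed.

Lemma Hq_horner0 : Hq.[0] = nu - 1.
Proof.
rewrite /Hq !hornerE /Qprod horner_prod big1 ?mulr1 // => j _.
by rewrite horner_comp piter_horner0 horner_coef0.
Qed.

Lemma Hq_neq0 : Hq != 0.
Proof.
by apply: contra_neq nu_neq1 => H0; apply/eqP; rewrite -subr_eq0 -Hq_horner0 H0 horner0.
Qed.

Lemma v_HqBnu1_le x : v x <= 1 -> v (Hq.[x] - (nu - 1)) <= v x.
Proof.
move=> hx; rewrite -Hq_horner0.
have := gauss_le1_lip hv Hq_gauss_le1 hx (_ : v 0 <= 1).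
by rewrite subr0 (v0 hv) ler01; apply.
Qed.

Lemma ppow_form_Qq : ppow_form v p (horner (piter Q q)) (horner Hq).
Proof.
split=> [x hx|x y hx hy]; last by apply: (gauss_le1_lip hv Hq_gauss_le1); apply: ltW.
split; first by rewrite piter_Qq hornerM hornerX horner_exp hornerD hornerC.
rewrite -(subrK (nu - 1) Hq.[x]); apply: (vD_lt hv) v_nu_sub1.
exact: le_lt_trans (v_HqBnu1_le (ltW hx)) hx.
Qed.

Lemma Q_redeg : exists2 D, (0 < D)%N & redeg v (1 + p * D) Q.
Proof.
have [i hi] := hSdeg.
have {}hi : exists i, (v S`_i == 1) && (0 < i)%N.
  exists i; case: i hi => [|i]; last by rewrite coefB coef1 subr0 => ->; rewrite eqxx.
  by rewrite coefB coef1 hS0 subrr (v0 hv) => /eqP; rewrite eq_sym oner_eq0.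
have hsize j : (v S`_j == 1) && (0 < j)%N -> (j <= size S)%N.
  move=> /andP[hj _]; rewrite leqNgt; apply: contraTN hj => /ltnW hs.
  by rewrite nth_default // (v0 hv) eq_sym oner_eq0.
have [D /andP[/eqP hD D0] Dmax] := ex_maxnP hi hsize.
exists D => //.
have hSD : redeg v D S.
  split => // j hj; rewrite lt_neqAle hS andbT; apply/negP => /eqP hj1.
  have := Dmax j; rewrite hj1 eqxx (leq_trans D0 (ltnW hj)) => /(_ isT).
  by rewrite leqNgt hj.
have hlamC : redeg v 0 lam%:P by apply: redegC.
by have := redegM hv (redegM hv hlamC (redegX hv)) (redegXn hv p hSD); rewrite add0n.
Qed.

Lemma piter_redeg d n : (0 < d)%N -> redeg v d Q -> redeg v (d ^ n) (piter Q n).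
Proof.
move=> d0 hQ; elim: n => [|n IH]; first exact: redegX.
by rewrite expnS; apply: redeg_comp; rewrite ?expn_gt0 ?d0.
Qed.

(* If [Hq] had no unit coefficient, [Q^q = X + X Hq^p] would reduce to [X],
   whereas its reduction has degree [(1 + p D)^q > 1]. *)
Lemma Hq_unit_coef : exists i, v Hq`_i = 1.
Proof.
have [/existsP [i /eqP hi]|hn] := boolP [exists i : 'I_(size Hq), v Hq`_i == 1].
  by exists i.
have hsmall : gauss_lt1 v Hq.
  move=> i; have [hi|hi] := ltnP i (size Hq); last by rewrite nth_default // (v0 hv) ltr01.
  rewrite lt_neqAle Hq_gauss_le1 andbT; apply: contraNN hn => hi1.
  by apply/existsP; exists (Ordinal hi).
have [D D0 hQ] := Q_redeg.
have [_ hN _] := piter_redeg q (ltn0Sn _ : (0 < 1 + p * D)%N) hQ.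
have N1 : (1 < (1 + p * D) ^ q)%N.
  have [q0 _ _] := hq; apply: leq_trans (leq_pexp2l _ q0) => //.
  by rewrite ltnS muln_gt0 p_gt0.
have hsmallp : gauss_lt1 v (Hq ^+ p).
  rewrite -(prednK p_gt0) exprS; apply: (gauss_lt1M hv) => //.
  exact/gauss_le1Xn/Hq_gauss_le1.
have hchP : p \in [pchar {poly L}] by rewrite pchar_poly.
exfalso; move: hN.
rewrite piter_Qq -(pFrobenius_autE hchP) rmorphD /= !pFrobenius_autE expr1n.
rewrite mulrDr mulr1 coefD coefX coefXM (gtn_eqF N1) add0r.
case: ((1 + p * D) ^ q)%N N1 => // N _ /eqP.
by rewrite lt_eqF ?hsmallp.
Qed.

Lemma root_Hq_fixed a : root Hq a -> (piter Q q).[a] = a.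
Proof.
move/rootP=> Ha; rewrite piter_Qq hornerM hornerX horner_exp hornerD hornerC Ha.
by rewrite addr0 expr1n mulr1.
Qed.

Lemma periodic_root_Hq a : periodic_pt v Q a -> root Hq a.
Proof.
move=> [ha a0 [n [n0 hn]]]; have /dvdnP [m em] := period_dvd ha a0 hn.
have m0 : (0 < m)%N by move: n0; rewrite em muln_gt0 => /andP[].
apply/rootP; apply: (ppow_form_periodic hv hp hch ppow_form_Qq m0 ha a0).
by rewrite -piterM_horner -em.
Qed.

Lemma v_piter_qpexpn_subX n x : v x < 1 ->
  v (piter Q (q * p ^ n) - 'X).[x] = v x * v Hq.[x] ^+ (p ^ n.+1).
Proof.
move=> hx; rewrite hornerD hornerN hornerX mulnC piterM_horner.
exact: (v_iter_pexpn_subX hv hp hch n ppow_form_Qq hx).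
Qed.

Lemma piter_qpexpn_subX_neq0 n : piter Q (q * p ^ n) - 'X != 0.
Proof.
set x := (nu - 1) ^+ 2.
have nu10 : 0 < v (nu - 1) by rewrite (v_gt0 hv) // subr_eq0 nu_neq1.
have hx : v x < v (nu - 1).
  by rewrite (vX hv) -{2}[v (nu - 1)]mul1r expr2 ltr_pM2r // v_nu_sub1.
have hx1 : v x < 1 := lt_trans hx v_nu_sub1.
have hHx : v Hq.[x] = v (nu - 1).
  rewrite -(subrK (nu - 1) Hq.[x]) (vD_eqr hv) //.
  exact: le_lt_trans (v_HqBnu1_le (ltW hx1)) hx.
apply/negP => /eqP/(congr1 (fun P => v P.[x])).
rewrite v_piter_qpexpn_subX // horner0 (v0 hv) hHx => /eqP.
have hx0 : 0 < v x by rewrite (vX hv) exprn_gt0.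
by rewrite mulf_eq0 expf_eq0 (gt_eqF nu10) (gt_eqF hx0) andbF.
Qed.

Lemma mup_piter_qpexpn n a : v a < 1 -> a != 0 ->
  mup a (piter Q (q * p ^ n) - 'X) = (p ^ n.+1 * mup a Hq)%N.
Proof.
move=> ha a0; have a_gt0 : 0 < v a by rewrite (v_gt0 hv).
apply: (mup_eq_of_v hv (pi := a) (c := v a) (d := v a)) => //.
- exact: piter_qpexpn_subX_neq0.
- exact: Hq_neq0.
- exact: ltW.
- by rewrite a_gt0.
move=> e he; have hae : v (a + e) = v a by rewrite (vD_eql hv).
by rewrite v_piter_qpexpn_subX hae.
Qed.

Lemma periodic_minimal_period a : periodic_pt v Q a -> minimal_period Q a q.
Proof.
move=> ha; have [ha1 a0 _] := ha; have [q0 _ _] := hq.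
split=> // [|k /andP[k0 kq]]; first exact/root_Hq_fixed/periodic_root_Hq.
apply/eqP => /(period_dvd ha1 a0) /(dvdn_leq k0).
by rewrite leqNgt kq.
Qed.

Lemma exists_periodic : exists a, periodic_pt v Q a.
Proof.
have hHq0 : v Hq`_0 < 1 by rewrite -horner_coef0 Hq_horner0 v_nu_sub1.
have [a ha hra] := exists_small_root hv hHq0 Hq_unit_coef.
have a0 : a != 0.
  by apply: contraTneq hra => ->; rewrite rootE Hq_horner0 subr_eq0 nu_neq1.
exists a; split => //; exists q; have [q0 _ _] := hq.
by split=> //; apply: root_Hq_fixed.
Qed.

Lemma periodic_finite : exists s : seq L, forall a, periodic_pt v Q a <-> a \in s.
Proof.
have [s hs] := closed_root_seq (piter_qpexpn_subX_neq0 0).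
exists [seq a <- s | (v a < 1) && (a != 0)] => a; rewrite mem_filter -hs muln1.
split=> [ha|/andP[/andP[ha1 a0] hr]].
  have [-> -> _] := ha; rewrite /root !hornerE root_Hq_fixed ?subrr //.
  exact: periodic_root_Hq.
split=> //; exists q; have [q0 _ _] := hq; split => //.
by apply/eqP; rewrite -subr_eq0; move: hr; rewrite rootE hornerD hornerN hornerX.
Qed.

Lemma fix_mult_qpexpn a n : periodic_pt v Q a ->
  fix_mult Q (q * p ^ n) a = (p ^ n * fix_mult Q q a)%N.
Proof.
move=> [ha a0 _]; rewrite /fix_mult -{2}[q]muln1 -(expn0 p).
by rewrite !mup_piter_qpexpn // mulnA -expnD addn1.
Qed.

Lemma p_dvd_fix_mult a : periodic_pt v Q a -> (p %| fix_mult Q q a)%N.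
Proof.
move=> [ha a0 _]; rewrite /fix_mult -{1}[q]muln1 -(expn0 p).
by rewrite mup_piter_qpexpn // expn1 dvdn_mulr.
Qed.

Theorem Qpoly_periodic_points :
  (forall a, periodic_pt v Q a -> minimal_period Q a q) /\
  (exists a, periodic_pt v Q a) /\
  (exists s : seq L, forall a, periodic_pt v Q a <-> a \in s) /\
  (forall a, periodic_pt v Q a ->
     [/\ piter Q q - 'X != 0, (p %| fix_mult Q q a)%N &
         forall n, (1 <= n)%N ->
           piter Q (q * p ^ n) - 'X != 0 /\
           fix_mult Q (q * p ^ n) a = (p ^ n * fix_mult Q q a)%N]).
Proof.
split; first exact: periodic_minimal_period.
split; first exact: exists_periodic.
split; first exact: periodic_finite.
move=> a ha; split; last by move=> n _; rewrite piter_qpexpn_subX_neq0 fix_mult_qpexpn.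
  by have := piter_qpexpn_subX_neq0 0; rewrite muln1.
exact: p_dvd_fix_mult.
Qed.

End QDynamics.

Theorem propositionA1
  (R : realType) (p : nat) (K : fieldType) (absK : K -> R)
  (hK : ultra_abs absK) (hp : prime p) (hchar : p \in [pchar K])
  (lam : K) (hlam : absK lam = 1) (q : nat) (hq : residue_order absK lam q)
  (hlamq : lam ^+ q != 1)
  (S : {poly K}) (hSint : forall i, absK S`_i <= 1) (hS0 : S`_0 = 1)
  (hwideg : exists i, absK (S - 1)`_i = 1)
  (L : closedFieldType) (absL : L -> R) (hL : ultra_abs absL)
  (f : {rmorphism K -> L}) (hf : forall x, absL (f x) = absK x) :
  let QL := map_poly f (Qpoly lam S p) in
  (forall a, periodic_pt absL QL a -> minimal_period QL a q) /\
  (exists a, periodic_pt absL QL a) /\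
  (exists s : seq L, forall a, periodic_pt absL QL a <-> a \in s) /\
  (forall a, periodic_pt absL QL a ->
     [/\ piter QL q - 'X != 0,
         (p %| fix_mult QL q a)%N &
         forall n, (1 <= n)%N ->
           piter QL (q * p ^ n) - 'X != 0 /\
           fix_mult QL (q * p ^ n) a = (p ^ n * fix_mult QL q a)%N]).
Proof.
rewrite /= map_Qpoly.
have [nu hnu] := closed_field_exists_root (f lam ^+ q) (prime_gt0 hp).
apply: (Qpoly_periodic_points hL hp (rmorph_pchar f hchar) _
          (residue_order_rmorph hf hq) _ _ _ _ hnu).
- by rewrite hf.
- by rewrite -rmorphXn fmorph_eq1.
- by move=> i; rewrite coef_map hf.
- by rewrite coef_map hS0; apply: rmorph1.
have [i hi] := hwideg; exists i.
by rewrite -(rmorph1 (map_poly f)) -rmorphB coef_map hf.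
Qed.
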